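(* Let $p\in\{2,3\}$ and $D=A\times B$ with $A=\langle a\rangle$, $B=\langle b\rangle$, $|a|=|b|=p$. If $\mathcal{A}$ is an $S$-ring over $D$, then one of the following holds: (1) $\mathcal{A}$ has rank $2$; (2) $\mathcal{A}$ is the tensor product of two $S$-rings over cyclic groups of order $p$; (3) $\mathcal{A}$ is the wreath product of two $S$-rings over cyclic groups of order $p$; (4) $p=3$ and $\mathcal{A}=\mathrm{Cyc}(K,D)$, where $K=\{\varepsilon,\delta\}$, $\delta:x\mapsto x^{-1}$; (5) $p=3$ and $\mathcal{A}\cong_{\mathrm{Cay}}\mathrm{Cyc}(K,D)$, where $K=\langle\sigma\rangle$ and $\sigma\in\mathrm{Aut}(D)$ is given by $a\mapsto b$, $b\mapsto a^2$.
   Context: Let $G$ be a finite group with identity $e$; for $X\subseteq G$ write $\underline{X}=\sum_{x\in X}x\in\mathbb{Z}G$. An $S$-ring over $G$ is a subring $\mathcal{A}\subseteq\mathbb{Z}G$ for which there is a partition $\mathcal{S}(\mathcal{A})$ of $G$ (the basic sets) with $\{e\}\in\mathcal{S}(\mathcal{A})$, $X^{-1}\in\mathcal{S}(\mathcal{A})$ whenever $X\in\mathcal{S}(\mathcal{A})$, and $\mathcal{A}=\mathrm{Span}_{\mathbb{Z}}\{\underline{X}:X\in\mathcal{S}(\mathcal{A})\}$; the rank is $|\mathcal{S}(\mathcal{A})|$. For $S$-rings $\mathcal{A}_1,\mathcal{A}_2$ over $G_1,G_2$ (identities $e_1,e_2$), the tensor product $\mathcal{A}_1\otimes\mathcal{A}_2$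 is the $S$-ring over $G_1\times G_2$ with basic sets $X_1\times X_2$ ($X_i\in\mathcal{S}(\mathcal{A}_i)$), and the wreath product $\mathcal{A}_1\wr\mathcal{A}_2$ is the $S$-ring over $G_1\times G_2$ with basic sets $X_1\times\{e_2\}$ ($X_1\in\mathcal{S}(\mathcal{A}_1)$) and $G_1\times X_2$ ($X_2\in\mathcal{S}(\mathcal{A}_2)\setminus\{\{e_2\}\}$); here ''$\mathcal{A}$ is the tensor/wreath product of two $S$-rings over cyclic groups of order $p$'' means it equals such a product for a decomposition of $D$ as an internal direct product of two subgroups of order $p$. For $K\leq\mathrm{Aut}(G)$, $\mathrm{Cyc}(K,G)$ is the $S$-ring whose basic sets are the $K$-orbits on $G$; $\varepsilon$ is the identity. $\mathcal{A}\cong_{\mathrm{Cay}}\mathcal{A}'$ means there is a group isomorphism $f$ with $\{X^f:X\in\mathcal{S}(\mathcal{A})\}=\mathcal{S}(\mathcal{A}')$. *)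

From mathcomp Require Import all_boot all_fingroup all_algebra all_solvable.
Set Implicit Arguments. Unset Strict Implicit. Unset Printing Implicit Defensive.
Import GRing.Theory.
Local Open Scope group_scope.

Section SRing.
Variable gT : finGroupType.

(* Elements of the integral group ring are modelled as integer-valued
   functions on gT (their support lies in the ambient group). *)
Definition underline (X : {set gT}) : {ffun gT -> int} :=
  [ffun g => Posz (g \in X)].

Definition gr_mul (f h : {ffun gT -> int}) : {ffun gT -> int} :=
  [ffun g => (\sum_(x : gT) f x * h ((x^-1 * g)%g))%R].

Definition in_span (S : {set {set gT}}) (f : {ffun gT -> int}) : Prop :=
  exists c : {set gT} -> int,
    forall g, f g = (\sum_(X in S) c X * underline X g)%R.

(* S is the set of basic sets of an S-ring over G: a partition of G containing
   {e}, closed under inversion, whose span (the Z-span of the underline X) is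
   closed under multiplication (hence is a subring of ZG). *)
Definition is_Sring (G : {group gT}) (S : {set {set gT}}) : Prop :=
  [/\ partition S G, [set 1] \in S,
      (forall X, X \in S -> X^-1 \in S) &
      (forall X Y, X \in S -> Y \in S ->
         in_span S (gr_mul (underline X) (underline Y)))].

Definition sring_rank (S : {set {set gT}}) : nat := #|S|.

(* basic sets of the tensor product of S1 over A1 and S2 over A2
   (inside the internal direct product A1 x A2, X1 x X2 is X1 * X2) *)
Definition tensor_bs (S1 S2 : {set {set gT}}) : {set {set gT}} :=
  [set X1 * X2 | X1 in S1, X2 in S2].

Definition wreath_bs (A1 : {set gT}) (S1 S2 : {set {set gT}}) : {set {set gT}} :=
  S1 :|: [set A1 * X2 | X2 in S2 :\ [set 1]].

Definition Cyc (K : {set {perm gT}}) (D : {set gT}) : {set {set gT}} :=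
  [set orbit 'P K x | x in D].

End SRing.

From mathcomp Require Import all_boot all_fingroup all_algebra all_solvable.
From mathcomp Require Import zify.
Set Implicit Arguments. Unset Strict Implicit. Unset Printing Implicit Defensive.
Import GRing.Theory.

(* Writing k < p^2 for a^(k / p) b^(k %% p) identifies D with (Z/p)^2, and a
   partition of D with the labelling of {0, ..., p^2 - 1} by block minima.  The
   S-ring axioms become decidable properties of the labelling: {1} is a block,
   blocks are closed under inversion, and the structure constant
   #{x in X | x^-1 z in Y} only depends on the block of z.  For p = 2, 3 a
   computation over all labellings shows that every S-ring labelling has rank 2,
   is the partition into the sets {x, x^-1} (p = 3), or, read in the
   coordinates of some basis (u, v) of D, is the tensor or wreath product of
   S-rings over <u> and <v>, or the orbit partition of sigma (p = 3).  Such a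
   basis gives <u> \x <v> = D and a change-of-basis automorphism of D, which
   carries each certificate back to the partition S. *)

(* The sequences s with s_k <= k and s_(s_k) = s_k, i.e. the labellings of the
   partitions of {0, ..., m - 1} by block minima. *)
Fixpoint labellings m : seq (seq nat) :=
  if m is m'.+1 then
    flatten [seq [seq rcons s x | x <- iota 0 m & (x == m') || (nth 0 s x == x)]
            | s <- labellings m']
  else [:: [::]].

Lemma labellings_complete m s : size s = m ->
    (forall k, k < m -> nth 0 s k <= k /\ nth 0 s (nth 0 s k) = nth 0 s k) ->
  s \in labellings m.
Proof.
elim: m s => [|m IH] s; first by move/size0nil->; rewrite inE.
move=> size_s s_canon.
have -> : s = rcons (take m s) (nth 0 s m).
  by rewrite -take_nth ?size_s // -size_s take_size.
have take_in : take m s \in labellings m.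
  apply: IH => [|k lt_km]; first by rewrite size_take size_s ltnSn.
  have [le_sk idem_sk] := s_canon k (ltnW lt_km).
  by rewrite !nth_take // (leq_ltn_trans le_sk).
apply/flattenP; eexists; first exact: (map_f _ take_in).
apply: map_f; rewrite mem_filter mem_iota /=.
have [le_sm idem_sm] := s_canon m (ltnSn m); rewrite ltnS le_sm andbT.
by case: ltngtP le_sm => // lt_sm _; rewrite nth_take // idem_sm eqxx orbT.
Qed.

(* The partitions of the two S-rings over a cyclic group of order 2 or 3 with
   identity e: the group ring (t = false) and the rank 2 S-ring (t = true). *)
Definition small_rel {T : eqType} (e : T) (t : bool) (x y : T) :=
  (x == y) || [&& t, x != e & y != e].

Section Indices.
Variable p : nat.

(* An index k < p * p stands for the coordinates (k %/ p, k %% p) in (Z/p)^2,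
   and [idx_lin i u j v] for the coordinates of i u + j v. *)
Definition idx i j := (i %% p) * p + j %% p.
Definition idx_lin i u j v :=
  idx (i * (u %/ p) + j * (v %/ p)) (i * (u %% p) + j * (v %% p)).
Definition idx_change u v k := idx_lin (k %/ p) u (k %% p) v.
Definition idx_sub k l := idx_lin 1 k p.-1 l.

Definition all_idx (P : pred nat) := all P (iota 0 (p * p)).
Definition all_coords (P : nat -> nat -> bool) :=
  all (fun i => all (P i) (iota 0 p)) (iota 0 p).

Section Labelling.
Variable r : seq nat.

Definition same_block k l := nth 0 r k == nth 0 r l.

Definition unit_block := all_idx (fun k => (nth 0 r k == 0) == (k == 0)).
Definition inv_closed := all_idx (fun k => all_idx (fun l =>
  same_block k l ==> same_block (idx_sub 0 k) (idx_sub 0 l))).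
Definition sub_count i j z :=
  count (fun k => same_block i k && same_block j (idx_sub z k)) (iota 0 (p * p)).
Definition block_reps := [seq k <- iota 0 (p * p) | nth 0 r k == k].
Definition sub_count_const := all (fun i => all (fun j =>
  all_idx (fun z => sub_count i j z == sub_count i j (nth 0 r z))) block_reps) block_reps.

Definition rank2 := all (same_block 1) (iota 1 (p * p).-1).
Definition inv_orbits := all_idx (fun k => all_idx (fun l =>
  same_block k l == (l == k) || (l == idx_sub 0 k))).
Definition tensor_std t1 t2 := all_coords (fun i j => all_coords (fun k l =>
  same_block (i * p + j) (k * p + l) == small_rel 0 t1 i k && small_rel 0 t2 j l)).
Definition wreath_std t1 t2 := all_coords (fun i j => all_coords (fun k l =>
  same_block (i * p + j) (k * p + l) ==
  if j == 0 then (l == 0) && small_rel 0 t1 i k else small_rel 0 t2 j l)).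
(* [idx_change 1 (2 * p)] is sigma : a |-> b, b |-> a^2 in coordinates. *)
Definition sigma_orbits := all_idx (fun k => let o := traject (idx_change 1 (2 * p)) k 4 in
  all_idx (fun l => same_block k l == (l \in o))).

End Labelling.

Definition basis u v := uniq [seq idx_change u v k | k <- iota 0 (p * p)].
Definition relabel r u v := [seq nth 0 r (idx_change u v k) | k <- iota 0 (p * p)].
Definition exists_small (P : bool -> bool -> bool) :=
  has (fun t1 => has (P t1) [:: false; true]) [:: false; true].

Definition classified r := [|| rank2 r, (p == 3) && inv_orbits r |
  has (fun u => has (fun v => basis u v &&
    [|| exists_small (tensor_std (relabel r u v)), exists_small (wreath_std (relabel r u v)) |
        (p == 3) && sigma_orbits (relabel r u v)]) (iota 0 (p * p))) (iota 0 (p * p))].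

(* Nested [if]s rather than [&&]: [vm_compute] evaluates both arguments of
   [andb], and most labellings already fail [unit_block]. *)
Definition srings_classified := all (fun r =>
  if unit_block r then if inv_closed r then if sub_count_const r then classified r
  else true else true else true)
  (labellings (p * p)).

End Indices.

Lemma srings_classified3 : srings_classified 3. Proof. by vm_compute. Qed.
Lemma srings_classified2 : srings_classified 2. Proof. by vm_compute. Qed.

Lemma sigma3_basis_period4 :
  basis 3 1 (2 * 3) && all_idx 3 (fun k => iter 4 (idx_change 3 1 (2 * 3)) k == k).
Proof. by vm_compute. Qed.

Section IndexArith.
Variable p : nat.
Hypothesis p_gt0 : 0 < p.

Lemma idx_lt i j : idx p i j < p * p.
Proof. by rewrite /idx; have := ltn_pmod i p_gt0; have := ltn_pmod j p_gt0; nia. Qed.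

Lemma idx_divp i j : idx p i j %/ p = i %% p.
Proof. by rewrite /idx divnMDl // divn_small ?addn0 // ltn_pmod. Qed.

Lemma idx_modp i j : idx p i j %% p = j %% p.
Proof. by rewrite /idx modnMDl modn_mod. Qed.

Lemma idx_sub_lt k l : idx_sub p k l < p * p.
Proof. exact: idx_lt. Qed.

Lemma idx_change_lt u v k : idx_change p u v k < p * p.
Proof. exact: idx_lt. Qed.

Lemma idx_small i j : i < p -> j < p -> idx p i j = i * p + j.
Proof. by move=> lt_ip lt_jp; rewrite /idx !modn_small. Qed.

Lemma idx_divmod k : k < p * p -> idx p (k %/ p) (k %% p) = k.
Proof. by move=> lt_k; rewrite idx_small ?ltn_pmod ?ltn_divLR // -divn_eq. Qed.

Lemma coords_lt i j : i < p -> j < p -> i * p + j < p * p.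
Proof. by move=> lt_i lt_j; rewrite -idx_small ?idx_lt. Qed.

End IndexArith.

Lemma small_rel_equiv (T : eqType) (e : T) t : equivalence_rel (small_rel e t).
Proof.
move=> x y z; split=> [|]; first by rewrite /small_rel eqxx.
rewrite /small_rel; case: (eqVneq x y) => [-> //|_] /= /and3P[-> xe ye] /=.
rewrite xe ye /=.
by case: (eqVneq z e) => [->|_]; rewrite ?orbT ?orbF // (negbTE xe) (negbTE ye).
Qed.

Lemma small_rel_map (T T' : eqType) (A : {pred T}) (f : T -> T') e t :
  {in A &, injective f} -> e \in A -> {in A &, forall x y,
  small_rel (f e) t (f x) (f y) = small_rel e t x y}.
Proof.
move=> f_inj Ae x y Ax Ay.
by rewrite /small_rel !(inj_in_eq f_inj).
Qed.

Local Open Scope group_scope.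

Section GroupRing.
Variable gT : finGroupType.
Implicit Types (G H : {group gT}) (X Y Z : {set gT}) (P : {set {set gT}}) (f : {ffun gT -> int}).

Lemma gr_mul_underline X Y g :
  gr_mul (underline X) (underline Y) g = #|[set x in X | x^-1 * g \in Y]|.
Proof.
rewrite ffunE -sum1_card (big_morph Posz PoszD (erefl (Posz 0))) [RHS]big_mkcond.
by apply: eq_bigr => x _; rewrite !ffunE !inE; case: (x \in X); case: (_ \in Y).
Qed.

Lemma in_span_blockwise P G f : partition P G ->
    (forall g, g \notin G -> f g = 0%R) ->
    (forall Z g h, Z \in P -> g \in Z -> h \in Z -> f g = f h) ->
  in_span P f.
Proof.
case/and3P=> /eqP coverP trivP _ f_out f_const.
exists (fun X => f (repr X)) => g.
have [Gg|notGg] := boolP (g \in G); last first.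
  rewrite f_out // big1 // => X PX; rewrite ffunE.
  suff -> : g \in X = false by rewrite mulr0.
  by apply: contraNF notGg => Xg; rewrite -coverP; apply/bigcupP; exists X.
have Pg : g \in cover P by rewrite coverP.
rewrite (bigD1 (pblock P g)) ?pblock_mem //= big1 => [|X /andP[PX neq_X]].
  have Pg_g : g \in pblock P g by rewrite mem_pblock.
  by rewrite ffunE Pg_g mulr1 addr0; apply: f_const (pblock_mem Pg) Pg_g (mem_repr _ Pg_g).
rewrite ffunE /=; case Xg: (g \in X); last by rewrite mulr0.
by case/eqP: neq_X; rewrite (def_pblock trivP PX Xg).
Qed.

Lemma in_span_const P f Z g h : trivIset P -> in_span P f ->
  Z \in P -> g \in Z -> h \in Z -> f g = f h.
Proof.
move=> trivP [c span_f] PZ Zg Zh; rewrite !span_f.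
suff coefZ x : x \in Z -> (\sum_(X in P) c X * underline X x = c Z)%R by rewrite !coefZ.
move=> Zx; rewrite (bigD1 Z) //= big1 => [|X /andP[PX neq_X]].
  by rewrite ffunE Zx mulr1 addr0.
rewrite ffunE /=; case Xx: (x \in X); last by rewrite mulr0.
by case/eqP: neq_X; rewrite -(def_pblock trivP PX Xx) (def_pblock trivP PZ Zx).
Qed.

Lemma gr_mul_out G X Y g : X \subset G -> Y \subset G -> g \notin G ->
  gr_mul (underline X) (underline Y) g = 0%R.
Proof.
move=> sXG sYG notGg; rewrite gr_mul_underline (_ : [set x in X | _] = set0) ?cards0 //.
apply/setP => x; rewrite !inE; apply: contraNF notGg => /andP[Xx Yxg].
by rewrite -(mulKVg x g) groupM ?(subsetP sXG _ Xx) ?(subsetP sYG _ Yxg).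
Qed.

Lemma rank2_mul_const H X Y g h :
    X \in [set [set 1]; H :\ 1] -> Y \in [set [set 1]; H :\ 1] ->
    g \in H :\ 1 -> h \in H :\ 1 ->
  #|[set x in X | x^-1 * g \in Y]| = #|[set x in X | x^-1 * h \in Y]|.
Proof.
move=> X12 Y12 H1g H1h.
suff [c card_c] : exists c, forall u, u \in H :\ 1 -> #|[set x in X | x^-1 * u \in Y]| = c.
  by rewrite !card_c.
rewrite !inE in X12 Y12.
case/orP: X12 => /eqP->; case/orP: Y12 => /eqP->.
- exists 0%N => u /setD1P[u1 _]; rewrite (_ : [set x in _ | _] = set0) ?cards0 //.
  apply/setP => x.
  by rewrite !inE; case: eqVneq => //= ->; rewrite invg1 mul1g (negbTE u1).
- exists 1%N => u /setD1P[u1 Hu]; rewrite (_ : [set x in _ | _] = [set 1]) ?cards1 //.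
  by apply/setP => x; rewrite !inE; case: eqVneq => //= ->; rewrite invg1 mul1g u1 Hu.
- exists 1%N => u /setD1P[u1 Hu]; rewrite (_ : [set x in _ | _] = [set u]) ?cards1 //.
  by apply/setP => x; rewrite !inE -eq_mulVg1 andbC; case: (eqVneq x u) => //= ->; rewrite u1 Hu.
exists #|H :\ 1|.-1 => u H1u; rewrite (cardsD1 u (H :\ 1)) H1u /=.
move: H1u => /setD1P[u1 Hu]; congr #|pred_of_set _|; apply/setP => x; rewrite !inE -eq_mulVg1.
case Hx: (x \in H); rewrite ?andbF ?andbT //= groupM ?groupV // andbT.
by rewrite eq_sym andbC.
Qed.

Definition smallS H t := equivalence_partition (small_rel (1 : gT) t) H.

Lemma smallS_partition H t : partition (smallS H t) H.
Proof. by apply: equivalence_partitionP => x y z _ _ _; apply: small_rel_equiv. Qed.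

Lemma mem_pblock_smallS H t :
  {in H &, forall x y, (y \in pblock (smallS H t) x) = small_rel 1 t x y}.
Proof. by apply: pblock_equivalence_partition => x y z _ _ _; apply: small_rel_equiv. Qed.

Lemma small_block1 H t : [set y in H | small_rel 1 t 1 y] = [set 1].
Proof.
apply/setP => y; rewrite !inE /small_rel eqxx andbF orbF.
by rewrite andb_idl => [|/eqP <-]; [apply: eq_sym | apply: group1].
Qed.

Lemma small_block_true H x : x \in H -> x != 1 ->
  [set y in H | small_rel 1 true x y] = H :\ 1.
Proof.
move=> Hx x1; apply/setP => y; rewrite !inE /small_rel x1 /= andbC.
by case: (eqVneq x y) => [<-|_]; rewrite ?x1 ?Hx.
Qed.

Lemma smallS_true H : smallS H true \subset [set [set 1]; H :\ 1].
Proof.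
apply/subsetP => _ /imsetP[x Hx ->]; rewrite !inE.
by case: (eqVneq x 1) => [->|x1]; rewrite ?small_block1 ?small_block_true ?eqxx ?orbT.
Qed.

Lemma card_smallS_true H : 1 < #|H| -> #|smallS H true| = 2.
Proof.
move=> H_gt1; have /card_gt0P[x H1x] : 0 < #|H :\ 1|.
  by move: H_gt1; rewrite (cardsD1 1 H) group1.
have /setD1P[x1 Hx] := H1x.
suff -> : smallS H true = [set [set 1]; H :\ 1].
  rewrite cards2 (_ : [set 1] != H :\ 1) //; apply/eqP => /setP/(_ 1).
  by rewrite !inE eqxx.
apply/eqP; rewrite eqEsubset smallS_true; apply/subsetP => X; rewrite !inE.
case/orP => /eqP->; apply/imsetP; [exists 1 | exists x] => //.
  by rewrite small_block1.
by rewrite small_block_true.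
Qed.

Lemma smallS_sring H t : is_Sring H (smallS H t).
Proof.
have partH := smallS_partition H t.
split=> // [|_ /imsetP[x Hx ->]|X Y SX SY].
- by apply/imsetP; exists 1; rewrite ?small_block1.
- apply/imsetP; exists x^-1; rewrite ?groupV //; apply/setP => y.
  by rewrite !inE groupV /small_rel !eq_invg1 eq_invg_sym.
apply: (in_span_blockwise partH) => [g|Z g h SZ Zg Zh].
  exact: gr_mul_out (partitionS partH SX) (partitionS partH SY).
have [<- //|neq_gh] := eqVneq g h.
have [Hg Hh] : g \in H /\ h \in H by rewrite !(subsetP (partitionS partH SZ)).
have : small_rel 1 t g h.
  by rewrite -(mem_pblock_smallS t Hg Hh) (def_pblock (partition_trivIset partH) SZ Zg).
rewrite /small_rel (negbTE neq_gh) => /and3P[tT g1 h1]; rewrite tT in SX SY.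
rewrite !gr_mul_underline; congr Posz.
by apply: (@rank2_mul_const H); rewrite ?(subsetP (smallS_true H)) // !inE ?g1 ?h1.
Qed.

End GroupRing.

Lemma partition_pblocks (T : finType) (P : {set {set T}}) (A : {set T}) :
  partition P A -> P = [set pblock P x | x in A].
Proof.
move=> partP; have /and3P[/eqP coverP trivP _] := partP.
apply/setP => X; apply/idP/imsetP => [PX|[x Ax ->]]; last by rewrite pblock_mem ?coverP.
have /set0Pn[x Xx] := partition_neq0 partP PX.
exists x; last by rewrite (def_pblock trivP PX Xx).
by rewrite -coverP; apply/bigcupP; exists X.
Qed.

Lemma pblock_sub (T : finType) (P : {set {set T}}) (A : {set T}) x :
  partition P A -> x \in A -> pblock P x \subset A.
Proof.
by move=> partP Ax; apply: (partitionS partP); rewrite pblock_mem ?(cover_partition partP).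
Qed.

Section ProductPartitions.
Variables (gT : finGroupType) (A1 A2 D : {group gT}) (S S1 S2 : {set {set gT}}).
Hypotheses (defD : A1 \x A2 = D) (partS : partition S D).
Hypotheses (partS1 : partition S1 A1) (partS2 : partition S2 A2).

Let mulD : A1 * A2 = D. Proof. by case/dprodP: defD. Qed.

Lemma partition_tensor :
    {in A1 & A2, forall x1 y1, {in A1 & A2, forall x2 y2,
      (x2 * y2 \in pblock S (x1 * y1)) = (x2 \in pblock S1 x1) && (y2 \in pblock S2 y1)}} ->
  S = tensor_bs S1 S2.
Proof.
move=> memS.
have blockS x1 y1 : x1 \in A1 -> y1 \in A2 ->
    pblock S (x1 * y1) = pblock S1 x1 * pblock S2 y1.
  move=> A1x1 A2y1; apply/setP => z; apply/idP/mulsgP => [Sz|[x2 y2 S1x2 S2y2 ->]].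
    have Dx1y1 : x1 * y1 \in D by rewrite -mulD mem_mulg.
    have : z \in A1 * A2 by rewrite mulD (subsetP (pblock_sub partS Dx1y1)).
    case/mulsgP => x2 y2 A1x2 A2y2 def_z; move: Sz.
    by rewrite def_z memS // => /andP[S1x2 S2y2]; exists x2 y2.
  have A1x2 := subsetP (pblock_sub partS1 A1x1) _ S1x2.
  have A2y2 := subsetP (pblock_sub partS2 A2y1) _ S2y2.
  by rewrite memS // S1x2 S2y2.
rewrite /tensor_bs {1}(partition_pblocks partS) {1}(partition_pblocks partS1).
rewrite {1}(partition_pblocks partS2); apply/setP => X; apply/imsetP/imset2P.
  case=> z; rewrite -mulD => /mulsgP[x1 y1 A1x1 A2y1 ->] ->.
  by exists (pblock S1 x1) (pblock S2 y1); rewrite ?imset_f ?blockS.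
case=> _ _ /imsetP[x1 A1x1 ->] /imsetP[y1 A2y1 ->] ->.
by exists (x1 * y1); rewrite ?blockS // -mulD mem_mulg.
Qed.

Lemma partition_wreath : [set 1] \in S2 ->
    {in A1 & A2, forall x1 y1, {in A1 & A2, forall x2 y2,
      (x2 * y2 \in pblock S (x1 * y1)) =
      if y1 == 1 then (y2 == 1) && (x2 \in pblock S1 x1) else y2 \in pblock S2 y1}} ->
  S = wreath_bs A1 S1 S2.
Proof.
move=> S2_1 memS.
have blockS x1 y1 : x1 \in A1 -> y1 \in A2 ->
    pblock S (x1 * y1) = if y1 == 1 then pblock S1 x1 else A1 * pblock S2 y1.
  move=> A1x1 A2y1; apply/setP => z; apply/idP/idP => [Sz|].
    have Dx1y1 : x1 * y1 \in D by rewrite -mulD mem_mulg.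
    have : z \in A1 * A2 by rewrite mulD (subsetP (pblock_sub partS Dx1y1)).
    case/mulsgP => x2 y2 A1x2 A2y2 def_z; move: Sz; rewrite def_z memS //.
    by case: eqVneq => [_ /andP[/eqP-> S1x2] | _ S2y2]; [rewrite mulg1 | apply: mem_mulg].
  case: eqVneq => [-> S1z | y1_neq1 /mulsgP[x2 y2 A1x2 S2y2 ->]].
    have A1z := subsetP (pblock_sub partS1 A1x1) _ S1z.
    by rewrite -[z]mulg1 memS ?group1 // eqxx S1z.
  have A2y2 := subsetP (pblock_sub partS2 A2y1) _ S2y2.
  by rewrite memS // (negbTE y1_neq1).
have DA2 y : y \in A2 -> y \in D by move=> A2y; rewrite -mulD -[y]mul1g mem_mulg.
rewrite /wreath_bs {1}(partition_pblocks partS); apply/setP => X; apply/imsetP/setUP.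
  case=> z; rewrite -mulD => /mulsgP[x1 y1 A1x1 A2y1 ->] ->; rewrite blockS //.
  case: eqVneq => [_|y1_neq1]; [left | right].
    by rewrite pblock_mem ?(cover_partition partS1).
  apply/imsetP; exists (pblock S2 y1) => //.
  rewrite !inE pblock_mem ?(cover_partition partS2) // andbT.
  apply: contra y1_neq1 => /eqP S2y1_1.
  by rewrite -in_set1 -S2y1_1 mem_pblock (cover_partition partS2).
case=> [|/imsetP[X2 /setD1P[neq1 S2X2] ->]].
  rewrite {1}(partition_pblocks partS1) => /imsetP[x1 A1x1 ->].
  exists x1; first by rewrite -mulD -[x1]mulg1 mem_mulg.
  by have := blockS x1 1 A1x1 (group1 _); rewrite mulg1 eqxx => ->.
move: S2X2 neq1; rewrite {1}(partition_pblocks partS2) => /imsetP[y1 A2y1 ->] neq1.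
exists y1; rewrite ?DA2 //; have := blockS 1 y1 (group1 _) A2y1; rewrite mul1g => ->.
case: eqVneq => // y1_1.
by rewrite y1_1 (def_pblock (partition_trivIset partS2) S2_1) ?set11 ?eqxx in neq1.
Qed.

End ProductPartitions.

Lemma Cyc_conj_orbits (gT : finGroupType) (D : {group gT}) (S : {set {set gT}})
    (g : {perm gT}) (K : {group {perm gT}}) :
    partition S D -> g \in Aut D -> K \subset Aut D ->
    {in D &, forall x y, (g y \in pblock S (g x)) = (y \in orbit 'P K x)} ->
  [set ((g^-1)%g : gT -> gT) @: X | X : {set gT} in S] = Cyc K D.
Proof.
move=> partS AutDg sKAut memS; set f := g^-1.
have AutDf : f \in Aut D by rewrite groupV.
have fD : f @: D = D by case/setIdP: AutDf => /im_perm_on.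
have orbitD x : x \in D -> orbit 'P K x \subset D.
  move=> Dx; apply/subsetP => _ /imsetP[k Kk ->].
  by rewrite /= apermE Aut_closed // (subsetP sKAut).
have blockS x : x \in D -> f @: pblock S x = orbit 'P K (f x).
  move=> Dx; apply/setP => z; apply/imsetP/idP => [[y Sy ->]|Oz].
    have Dy := subsetP (pblock_sub partS Dx) _ Sy.
    by rewrite -memS ?Aut_closed // !permKV.
  have Dz := subsetP (orbitD _ (Aut_closed AutDf Dx)) _ Oz.
  exists (g z); last by rewrite permK.
  by rewrite -(permKV g x) memS ?Aut_closed.
rewrite /Cyc {1}(partition_pblocks partS) -imset_comp -{2}fD -imset_comp.
by apply: eq_in_imset => x Dx /=; apply: blockS.
Qed.

Lemma Aut_of_morphic (gT : finGroupType) (G : {group gT}) (f : gT -> gT) :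
    {in G &, injective f} -> f @: G \subset G -> {in G &, {morph f : x y / x * y}} ->
  exists2 g, g \in Aut G & {in G, g =1 f}.
Proof.
move=> injf sfG fM; exists (perm_in injf sfG); last exact: perm_inE.
by rewrite inE perm_in_on; apply/morphicP => x y Gx Gy; rewrite !perm_inE ?groupM ?fM.
Qed.

Lemma Aut_invg (gT : finGroupType) (G : {group gT}) :
  abelian G -> exists2 g, g \in Aut G & {in G, forall x, g x = x^-1}.
Proof.
move=> abG; apply: Aut_of_morphic => [x y _ _||x y Gx Gy]; first exact: invg_inj.
  by apply/subsetP => _ /imsetP[x Gx ->]; rewrite groupV.
by rewrite invMg; apply: (centsP abG); rewrite groupV.
Qed.

Lemma card_ord_count n (P : pred nat) : #|[set k : 'I_n | P k]| = count P (iota 0 n).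
Proof.
rewrite -sum1_card (eq_bigl (fun k : 'I_n => P k)) => [|k]; last by rewrite inE.
by rewrite -(big_mkord P (fun=> 1%N)) sum1_count /index_iota subn0.
Qed.

Lemma small_rel_expg (gT : finGroupType) (x : gT) t i k : i < #[x] -> k < #[x] ->
  small_rel 1 t (x ^+ i) (x ^+ k) = small_rel 0 t i k.
Proof.
move=> lt_i lt_k; rewrite -(expg0 x).
apply: (small_rel_map (A := [pred i | i < #[x]])); rewrite ?inE ?order_gt0 // => m n.
by rewrite !inE => lt_m lt_n /eqP; rewrite eq_expg_mod_order !modn_small // => /eqP.
Qed.

Lemma expg_eq1_small (gT : finGroupType) (x : gT) j : j < #[x] -> (x ^+ j == 1) = (j == 0).
Proof. by move=> lt_j; rewrite -(expg0 x) eq_expg_mod_order !modn_small ?order_gt0. Qed.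

Lemma all_coordsP p (P : nat -> nat -> bool) i j : all_coords p P -> i < p -> j < p -> P i j.
Proof.
by move=> /allP/(_ i) allP_i lt_i lt_j; apply: (allP (allP_i _)); rewrite mem_iota.
Qed.

Section Coordinates.
Variables (gT : finGroupType) (p : nat) (D : {group gT}) (a b : gT).
Hypotheses (oa : #[a] = p) (ob : #[b] = p) (defD : <[a]> \x <[b]> = D).

Let p_gt0 : 0 < p. Proof. by rewrite -oa order_gt0. Qed.

Lemma abelian_D : abelian D.
Proof.
case/dprodP: defD => _ <- cab _.
by rewrite abelianM !cycle_abelian.
Qed.

Let commD x y : x \in D -> y \in D -> commute x y.
Proof. by move=> Dx Dy; apply: (centsP abelian_D). Qed.

Let aD : a \in D.
Proof. by rewrite -(dprodW defD); have := mem_mulg (cycle_id a) (group1 <[b]>); rewrite mulg1. Qed.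
Let bD : b \in D.
Proof. by rewrite -(dprodW defD); have := mem_mulg (group1 <[a]>) (cycle_id b); rewrite mul1g. Qed.

Lemma expg_exponent x : x \in D -> x ^+ p = 1.
Proof.
rewrite -(dprodW defD) => /mulsgP[_ _ /cycleP[i ->] /cycleP[j ->] ->].
rewrite expgMn; last by apply: commD; rewrite groupX.
have [ap bp] : a ^+ p = 1 /\ b ^+ p = 1 by rewrite -{1}oa -ob !expg_order.
by rewrite -!expgM !(mulnC _ p) !expgM ap bp !expg1n mulg1.
Qed.

Lemma card_D : #|D| = (p * p)%N.
Proof. by rewrite -(dprod_card defD) -!orderE oa ob. Qed.

Lemma expg_pred_exponent x : x \in D -> x ^+ p.-1 = x^-1.
Proof.
by move=> Dx; rewrite -(mulgK x (x ^+ p.-1)) -expgSr prednK // expg_exponent // mul1g.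
Qed.

Definition idx_elt (x y : gT) k := x ^+ (k %/ p) * y ^+ (k %% p).

Section IndexElements.
Variables x y : gT.
Hypotheses (Dx : x \in D) (Dy : y \in D).

Lemma idx_eltD k : idx_elt x y k \in D.
Proof. by rewrite groupM ?groupX. Qed.

Lemma idx_elt0 : idx_elt x y 0 = 1.
Proof. by rewrite /idx_elt div0n mod0n !expg0 mulg1. Qed.

Lemma idx_elt_idx i j : idx_elt x y (idx p i j) = x ^+ i * y ^+ j.
Proof. by rewrite /idx_elt idx_divp // idx_modp // !expg_mod ?expg_exponent. Qed.

Lemma idx_elt_lin i u j v :
  idx_elt x y (idx_lin p i u j v) = idx_elt x y u ^+ i * idx_elt x y v ^+ j.
Proof.
have cxy m n : commute (x ^+ m) (y ^+ n) by apply: commD; rewrite groupX.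
rewrite /idx_lin idx_elt_idx /idx_elt !expgMn // !expgD -!expgM !(mulnC i) !(mulnC j).
by rewrite -!mulgA; congr (_ * _); rewrite !mulgA; congr (_ * _); apply: cxy.
Qed.

Lemma idx_elt_sub k l : idx_elt x y (idx_sub p k l) = idx_elt x y k * (idx_elt x y l)^-1.
Proof. by rewrite idx_elt_lin expg1 expg_pred_exponent ?idx_eltD. Qed.

Lemma idx_elt_coords i j : i < p -> j < p -> idx_elt x y (i * p + j) = x ^+ i * y ^+ j.
Proof. by move=> lt_i lt_j; rewrite -idx_small ?idx_elt_idx. Qed.

End IndexElements.

Lemma idx_elt_change x y u v k : x \in D -> y \in D ->
  idx_elt x y (idx_change p u v k) = idx_elt (idx_elt x y u) (idx_elt x y v) k.
Proof. by move=> Dx Dy; rewrite idx_elt_lin. Qed.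

Local Notation phi := (idx_elt a b).

Lemma phi_inj : {in [pred k | k < p * p] &, injective phi}.
Proof.
move=> k l; rewrite !inE => lt_k lt_l eq_kl.
have [y [z [_ _ _ uniq_ab]]] := mem_dprod defD (idx_eltD aD bD k).
have [ya zb] := uniq_ab _ _ (mem_cycle a (k %/ p)) (mem_cycle b (k %% p)) erefl.
have [eq_a eq_b] := uniq_ab _ _ (mem_cycle a (l %/ p)) (mem_cycle b (l %% p)) eq_kl.
rewrite -ya in eq_a; rewrite -zb in eq_b.
have [lt_kp lt_lp] : k %/ p < p /\ l %/ p < p by rewrite !ltn_divLR.
move/eqP: eq_a; rewrite eq_expg_mod_order oa !modn_small // => /eqP eq_div.
move/eqP: eq_b; rewrite eq_expg_mod_order ob !modn_mod => /eqP eq_mod.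
by rewrite -(idx_divmod p_gt0 lt_k) -(idx_divmod p_gt0 lt_l) eq_div eq_mod.
Qed.

Lemma phi_onto x : x \in D -> exists2 k, k < p * p & phi k = x.
Proof.
rewrite -(dprodW defD) => /mulsgP[_ _ /cycleP[i ->] /cycleP[j ->] ->].
by exists (idx p i j); rewrite ?idx_lt ?idx_elt_idx.
Qed.

Definition elt_idx x := find (fun k => phi k == x) (iota 0 (p * p)).

Lemma elt_idx_spec x : x \in D -> elt_idx x < p * p /\ phi (elt_idx x) = x.
Proof.
case/phi_onto => k lt_k <-.
have has_k : has (fun l => phi l == phi k) (iota 0 (p * p)).
  by apply/hasP; exists k; rewrite ?mem_iota.
move: (has_k); rewrite has_find size_iota => lt_idx; split=> //.
by have := nth_find 0 has_k; rewrite nth_iota // => /eqP.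
Qed.

Lemma idx_eltK k : k < p * p -> elt_idx (phi k) = k.
Proof.
move=> lt_k; have [lt_idx eq_phi] := elt_idx_spec (idx_eltD aD bD k).
exact: phi_inj.
Qed.

Section Basis.
Variables x0 y0 : gT.
Hypotheses (Dx0 : x0 \in D) (Dy0 : y0 \in D).
Hypothesis inj0 : {in [pred k | k < p * p] &, injective (idx_elt x0 y0)}.

Lemma basis_order : #[x0] = p /\ #[y0] = p.
Proof.
have idx0 k : k < p * p -> idx_elt x0 y0 k = 1 -> k = 0.
  move=> lt_k eq1; apply: inj0; rewrite ?inE ?muln_gt0 ?p_gt0 //.
  by rewrite eq1 /idx_elt div0n mod0n !expg0 mulg1.
have le_p z : z \in D -> #[z] <= p.
  by move=> Dz; rewrite dvdn_leq // order_dvdn expg_exponent.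
split; apply/eqP; rewrite eqn_leq le_p //= leqNgt; apply/negP => lt_p.
  have /idx0 : #[x0] * p < p * p by rewrite ltn_mul2r p_gt0.
  rewrite /idx_elt mulnK // modnMl expg_order expg0 mulg1 => /(_ erefl) /eqP.
  by rewrite muln_eq0 !gtn_eqF ?order_gt0.
have /idx0 : #[y0] < p * p by rewrite (leq_trans lt_p) // leq_pmull.
rewrite /idx_elt divn_small // modn_small // expg0 expg_order mul1g => /(_ erefl) /eqP.
by rewrite gtn_eqF ?order_gt0.
Qed.

Lemma basis_onto z : z \in D -> exists2 k, k < p * p & idx_elt x0 y0 k = z.
Proof.
pose T : {set gT} := [set idx_elt x0 y0 (val k) | k : 'I_(p * p)].
suff defT : T = D.
  by rewrite -defT /T => /imsetP[k _ ->]; exists (val k); rewrite ?ltn_ord.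
apply/eqP; rewrite eqEcard; apply/andP; split.
  by apply/subsetP => _ /imsetP[k _ ->]; apply: idx_eltD.
rewrite card_imset => [|k l eq_kl]; last by apply/val_inj/inj0; rewrite ?inE ?ltn_ord.
by rewrite card_ord card_D.
Qed.

Lemma basis_dprod : <[x0]> \x <[y0]> = D.
Proof.
have [ox0 oy0] := basis_order.
rewrite dprodE; [|exact: cents_cycle (commD Dy0 Dx0)|].
  apply/eqP; rewrite eqEsubset mul_subG ?cycle_subG //=.
  by apply/subsetP => z /basis_onto[k _ <-]; rewrite mem_mulg ?mem_cycle.
apply/trivgP/subsetP => z /setIP[/cycleP[i ->] /cycleP[j eq_ij]].
rewrite -(expg_mod_order x0 i) ox0 in eq_ij *; rewrite -(expg_mod_order y0 j) oy0 in eq_ij.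
have lt_ip := ltn_pmod i p_gt0; have lt_jp := ltn_pmod j p_gt0.
have : idx_elt x0 y0 (i %% p * p) = idx_elt x0 y0 (j %% p).
  by rewrite /idx_elt mulnK // modnMl modn_mod divn_small // !expg0 mulg1 mul1g.
move/inj0; rewrite !inE ltn_mul2r p_gt0 lt_ip (leq_trans lt_jp (leq_pmull _ p_gt0)).
move=> /(_ isT isT) eq_ij_idx.
have : i %% p * p < 1 * p by rewrite eq_ij_idx mul1n.
by rewrite ltn_mul2r p_gt0 ltnS leqn0 => /eqP ->; rewrite expg0.
Qed.

Lemma Aut_basis_change :
  exists2 g, g \in Aut D & forall k, k < p * p -> g (phi k) = idx_elt x0 y0 k.
Proof.
suff [g AutDg gE] : exists2 g, g \in Aut D & {in D, g =1 fun z => idx_elt x0 y0 (elt_idx z)}.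
  by exists g => // k lt_k; rewrite gE ?idx_eltD ?idx_eltK.
apply: Aut_of_morphic => [z1 z2 Dz1 Dz2 /inj0||z1 z2].
- have [lt1 E1] := elt_idx_spec Dz1; have [lt2 E2] := elt_idx_spec Dz2.
  by move=> /(_ lt1 lt2) eq12; rewrite -E1 -E2 eq12.
- by apply/subsetP => _ /imsetP[z _ ->]; apply: idx_eltD.
case/phi_onto => k lt_k <-; case/phi_onto => l lt_l <-.
have -> : phi k * phi l = phi (idx_lin p 1 k 1 l) by rewrite idx_elt_lin ?expg1.
by rewrite !idx_eltK ?idx_lt // idx_elt_lin // !expg1.
Qed.

Lemma basis_factors t1 t2 :
  [/\ <[x0]> \x <[y0]> = D, cyclic <[x0]> /\ #|<[x0]>| = p, cyclic <[y0]> /\ #|<[y0]>| = p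
    & is_Sring <[x0]> (smallS <[x0]> t1) /\ is_Sring <[y0]> (smallS <[y0]> t2)].
Proof.
have [ox0 oy0] := basis_order.
by split; rewrite ?cycle_cyclic -?orderE ?basis_dprod //; split; apply: smallS_sring.
Qed.

End Basis.

Lemma basis_inj u v : basis p u v ->
  {in [pred k | k < p * p] &, injective (idx_elt (phi u) (phi v))}.
Proof.
move=> uniq_uv k l lt_k lt_l; rewrite -!idx_elt_change //.
move/phi_inj; rewrite !inE !(idx_change_lt p_gt0) => /(_ isT isT) eq_kl.
have := nth_uniq 0 _ _ uniq_uv; rewrite size_map size_iota => /(_ k l lt_k lt_l).
by rewrite !(nth_map 0) ?size_iota // !nth_iota // eq_kl eqxx => /esym/eqP.
Qed.

Section SringLabels.
Variable S : {set {set gT}}.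
Hypothesis sringS : is_Sring D S.

Let partS : partition S D. Proof. by case: sringS. Qed.
Let trivS : trivIset S. Proof. exact: partition_trivIset partS. Qed.
Let coverS : cover S = D. Proof. exact: cover_partition partS. Qed.
Let pblock1 : pblock S 1 = [set 1].
Proof. by case: sringS => _ S1 _ _; rewrite (def_pblock trivS S1) ?set11. Qed.

Definition lab k := find (fun j => phi j \in pblock S (phi k)) (iota 0 (p * p)).
Definition labels := [seq lab k | k <- iota 0 (p * p)].

Lemma lab_spec k : k < p * p -> lab k <= k /\ phi (lab k) \in pblock S (phi k).
Proof.
move=> lt_k; have Sk : phi k \in pblock S (phi k) by rewrite mem_pblock coverS idx_eltD.
have has_k : has (fun j => phi j \in pblock S (phi k)) (iota 0 (p * p)).
  by apply/hasP; exists k; rewrite ?mem_iota.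
have lt_lab : lab k < p * p by move: (has_k); rewrite has_find size_iota.
split; last by have := nth_find 0 has_k; rewrite nth_iota.
rewrite leqNgt; apply/negP => /(before_find 0).
by rewrite nth_iota ?Sk // (ltn_trans _ lt_k).
Qed.

Lemma nth_labels k : k < p * p -> nth 0 labels k = lab k.
Proof. by move=> lt_k; rewrite (nth_map 0) ?size_iota // nth_iota. Qed.

Lemma same_block_labels k l : k < p * p -> l < p * p ->
  same_block labels k l = (phi l \in pblock S (phi k)).
Proof.
move=> lt_k lt_l; rewrite /same_block !nth_labels //.
rewrite -eq_pblock ?coverS ?idx_eltD //; apply/eqP/eqP => [eq_lab|eq_S]; last by rewrite /lab eq_S.
have [_ Sk] := lab_spec lt_k; have [_ Sl] := lab_spec lt_l.
by rewrite -(same_pblock trivS Sk) -(same_pblock trivS Sl) eq_lab.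
Qed.

Lemma labels_in : labels \in labellings (p * p).
Proof.
apply: labellings_complete => [|k lt_k]; first by rewrite size_map size_iota.
have [le_k _] := lab_spec lt_k; have lt_lab := leq_ltn_trans le_k lt_k.
rewrite !nth_labels //; split=> //; apply/eqP.
move: (same_block_labels lt_lab lt_k); rewrite /same_block !nth_labels // => ->.
by rewrite (same_pblock trivS (lab_spec lt_k).2) mem_pblock coverS idx_eltD.
Qed.

Lemma labels_unit_block : unit_block p labels.
Proof.
have lt0 : 0 < p * p by rewrite muln_gt0 p_gt0.
have lab0 : nth 0 labels 0 = 0.
  by rewrite nth_labels //; have [] := lab_spec lt0; rewrite leqn0 => /eqP.
apply/allP => k; rewrite mem_iota => /andP[_ lt_k].
move: (same_block_labels lt0 lt_k); rewrite /same_block lab0 eq_sym => ->.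
rewrite idx_elt0 pblock1 inE.
by rewrite -(idx_elt0 a b) (inj_in_eq phi_inj) ?inE.
Qed.

Lemma pblockV x : x \in D -> pblock S x^-1 = (pblock S x)^-1.
Proof.
move=> Dx; have [_ _ SV _] := sringS.
apply: def_pblock (SV _ (pblock_mem _)) _; rewrite ?coverS //.
by rewrite inE invgK mem_pblock coverS.
Qed.

Lemma labels_inv_closed : inv_closed p labels.
Proof.
apply/allP => k; rewrite mem_iota => /andP[_ lt_k].
apply/allP => l; rewrite mem_iota => /andP[_ lt_l].
rewrite !same_block_labels ?idx_sub_lt // !idx_elt_sub // !idx_elt0 !mul1g.
by rewrite pblockV ?idx_eltD // inE invgK; apply/implyP.
Qed.

Lemma gr_mul_labels i j z : i < p * p -> j < p * p -> z < p * p ->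
  gr_mul (underline (pblock S (phi i))) (underline (pblock S (phi j))) (phi z)
    = sub_count p labels i j z.
Proof.
move=> lt_i lt_j lt_z; rewrite gr_mul_underline /sub_count -card_ord_count; congr Posz.
rewrite -(card_in_imset (f := fun k : 'I_(p * p) => phi k)); last first.
  by move=> k l _ _ /phi_inj eq_kl; apply: val_inj; apply: eq_kl; rewrite inE.
congr #|pred_of_set _|; apply/setP => x; rewrite inE; apply/andP/imsetP => [[Sx Sxz]|[k]].
  have Dx : x \in D by apply: (subsetP (pblock_sub partS (idx_eltD aD bD i))).
  have [k lt_k def_x] := phi_onto Dx.
  exists (Ordinal lt_k); rewrite // inE !same_block_labels ?idx_sub_lt //= def_x Sx.
  by rewrite idx_elt_sub // def_x (commD (idx_eltD aD bD z)) ?groupV.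
rewrite inE !same_block_labels ?idx_sub_lt // idx_elt_sub // => /andP[Sk Szk] ->.
by rewrite Sk -(commD (idx_eltD aD bD z)) ?groupV ?idx_eltD.
Qed.

Lemma labels_sub_count_const : sub_count_const p labels.
Proof.
have lt_rep k : k \in block_reps p labels -> k < p * p.
  by rewrite mem_filter mem_iota => /andP[_ /andP[_ lt_k]].
apply/allP => i /lt_rep lt_i; apply/allP => j /lt_rep lt_j.
apply/allP => z; rewrite mem_iota => /andP[_ lt_z].
have [le_z Sz] := lab_spec lt_z; have lt_lab := leq_ltn_trans le_z lt_z.
have [_ _ _ spanS] := sringS.
have S_phi m : pblock S (phi m) \in S by rewrite pblock_mem ?coverS ?idx_eltD.
have Sz_z : phi z \in pblock S (phi z) by rewrite mem_pblock coverS idx_eltD.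
rewrite nth_labels // -eqz_nat -!gr_mul_labels //; apply/eqP.
exact: in_span_const trivS (spanS _ _ (S_phi i) (S_phi j)) (S_phi z) Sz_z Sz.
Qed.

Lemma same_block_relabel u v k l : k < p * p -> l < p * p ->
  same_block (relabel p labels u v) k l =
    (idx_elt (phi u) (phi v) l \in pblock S (idx_elt (phi u) (phi v) k)).
Proof.
have nth_relabel m : m < p * p -> nth 0 (relabel p labels u v) m = lab (idx_change p u v m).
  by move=> lt_m; rewrite (nth_map 0) ?size_iota // nth_iota // nth_labels ?idx_change_lt.
move=> lt_k lt_l; rewrite /same_block !nth_relabel //.
have := same_block_labels (idx_change_lt p_gt0 u v k) (idx_change_lt p_gt0 u v l).
by rewrite /same_block !nth_labels ?idx_change_lt // => ->; rewrite !idx_elt_change.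
Qed.

Lemma S_from_labels (B : gT -> {set gT}) : {in D, forall x, B x \subset D} ->
    (forall k l, k < p * p -> l < p * p -> same_block labels k l = (phi l \in B (phi k))) ->
  S = [set B x | x in D].
Proof.
move=> sBD sameB; rewrite {1}(partition_pblocks partS); apply: eq_in_imset => x Dx.
apply/setP => y; have [Dy|notDy] := boolP (y \in D).
  have [k lt_k <-] := phi_onto Dx; have [l lt_l <-] := phi_onto Dy.
  by rewrite -same_block_labels ?sameB.
rewrite (contraNF (subsetP (pblock_sub partS Dx) y)) //.
by rewrite (contraNF (subsetP (sBD x Dx) y)).
Qed.

Lemma rank2_case : 1 < p -> rank2 p labels -> sring_rank S = 2.
Proof.
move=> p_gt1 rk2; have lt1 : 1 < p * p by rewrite (leq_trans p_gt1) // leq_pmull.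
have lab0 m : m < p * p -> (nth 0 labels m == 0) = (m == 0).
  by have /allP unit0 := labels_unit_block; move=> lt_m; apply: (eqP (unit0 _ _)); rewrite mem_iota.
have lab1 m : 0 < m < p * p -> nth 0 labels m = nth 0 labels 1.
  case/andP=> m_gt0 lt_m; apply/esym/eqP/(allP rk2).
  by rewrite mem_iota m_gt0 add1n prednK // muln_gt0 p_gt0.
have nth0 : nth 0 labels 0 = 0 by apply/eqP; rewrite lab0 ?muln_gt0 ?p_gt0.
have same_small k l : k < p * p -> l < p * p -> same_block labels k l = small_rel 0 true k l.
  move=> lt_k lt_l; rewrite /same_block /small_rel /= -!lt0n.
  case: (posnP k) => [->|k_gt0]; case: (posnP l) => [->|l_gt0] /=.
  - by rewrite !eqxx.
  - by rewrite nth0 eq_sym lab0 // orbF eq_sym.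
  - by rewrite nth0 lab0 // orbF.
  by rewrite !lab1 ?k_gt0 ?l_gt0 // eqxx orbT.
rewrite /sring_rank (S_from_labels (B := fun x => [set y in D | small_rel 1 true x y])).
- by apply: card_smallS_true; rewrite card_D.
- by move=> x _; apply/subsetP => y; rewrite inE => /andP[].
move=> k l lt_k lt_l; rewrite inE idx_eltD // (same_small k l lt_k lt_l) -(idx_elt0 a b).
by rewrite (small_rel_map _ phi_inj) ?inE ?muln_gt0 ?p_gt0.
Qed.

Lemma inv_case : inv_orbits p labels -> exists delta : {perm gT},
  [/\ delta \in Aut D, (forall x, x \in D -> delta x = x^-1) & S = Cyc [set 1; delta] D].
Proof.
move=> inv; have [delta AutDd deltaE] := Aut_invg abelian_D.
have orbitE x : x \in D -> orbit 'P [set 1; delta] x = [set x; x^-1].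
  by move=> Dx; rewrite /orbit imsetU1 imset_set1 /= !apermE perm1 deltaE.
exists delta; split => //; rewrite /Cyc; apply: S_from_labels => [x Dx|k l lt_k lt_l].
  by rewrite orbitE //; apply/subsetP => y; rewrite !inE => /orP[]/eqP->; rewrite ?groupV.
have /allP/(_ k) := inv; rewrite mem_iota => /(_ lt_k)/allP/(_ l); rewrite mem_iota.
move=> /(_ lt_l)/eqP ->; rewrite orbitE ?idx_eltD // !inE.
by rewrite -!(inj_in_eq phi_inj) ?inE ?idx_sub_lt // idx_elt_sub // idx_elt0 mul1g.
Qed.

Lemma tensor_case u v t1 t2 : basis p u v -> tensor_std p (relabel p labels u v) t1 t2 ->
  exists (A1 A2 : {group gT}) (S1 S2 : {set {set gT}}),
    [/\ A1 \x A2 = D, cyclic A1 /\ #|A1| = p, cyclic A2 /\ #|A2| = p,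
         is_Sring A1 S1 /\ is_Sring A2 S2 & S = tensor_bs S1 S2].
Proof.
move=> buv tens; have Du := idx_eltD aD bD u; have Dv := idx_eltD aD bD v.
exists <[phi u]>%G, <[phi v]>%G, (smallS <[phi u]> t1), (smallS <[phi v]> t2).
have [? ? ? ?] := basis_factors Du Dv (basis_inj buv) t1 t2; split=> //.
have [ou ov] := basis_order Du Dv (basis_inj buv).
apply: (partition_tensor (basis_dprod Du Dv (basis_inj buv)) partS); try exact: smallS_partition.
move=> _ _ /cyclePmin[i lt_i ->] /cyclePmin[j lt_j ->].
move=> _ _ /cyclePmin[k lt_k ->] /cyclePmin[l lt_l ->].
rewrite !mem_pblock_smallS ?mem_cycle // !small_rel_expg //.
rewrite ou in lt_i lt_k; rewrite ov in lt_j lt_l.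
rewrite -!idx_elt_coords // -same_block_relabel ?coords_lt //.
exact: eqP (all_coordsP (all_coordsP tens lt_i lt_j) lt_k lt_l).
Qed.

Lemma wreath_case u v t1 t2 : basis p u v -> wreath_std p (relabel p labels u v) t1 t2 ->
  exists (A1 A2 : {group gT}) (S1 S2 : {set {set gT}}),
    [/\ A1 \x A2 = D, cyclic A1 /\ #|A1| = p, cyclic A2 /\ #|A2| = p,
         is_Sring A1 S1 /\ is_Sring A2 S2 & S = wreath_bs A1 S1 S2].
Proof.
move=> buv wr; have Du := idx_eltD aD bD u; have Dv := idx_eltD aD bD v.
exists <[phi u]>%G, <[phi v]>%G, (smallS <[phi u]> t1), (smallS <[phi v]> t2).
have [? ? ? ?] := basis_factors Du Dv (basis_inj buv) t1 t2; split=> //.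
have [ou ov] := basis_order Du Dv (basis_inj buv).
apply: (partition_wreath (basis_dprod Du Dv (basis_inj buv)) partS); try exact: smallS_partition.
  by apply/imsetP; exists 1; rewrite ?small_block1.
move=> _ _ /cyclePmin[i lt_i ->] /cyclePmin[j lt_j ->].
move=> _ _ /cyclePmin[k lt_k ->] /cyclePmin[l lt_l ->].
rewrite !mem_pblock_smallS ?mem_cycle // !small_rel_expg // !expg_eq1_small //.
rewrite ou in lt_i lt_k; rewrite ov in lt_j lt_l.
rewrite -!idx_elt_coords // -same_block_relabel ?coords_lt //.
exact: eqP (all_coordsP (all_coordsP wr lt_i lt_j) lt_k lt_l).
Qed.

Lemma sigma_case u v : p = 3 -> basis p u v -> sigma_orbits p (relabel p labels u v) ->
  exists sigma : {perm gT}, [/\ sigma \in Aut D, sigma a = b, sigma b = a ^+ 2 &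
    exists2 f : {perm gT}, f \in Aut D &
      [set (f : gT -> gT) @: X | X : {set gT} in S] = Cyc <[sigma]> D].
Proof.
move=> p3 buv sig; set sigma_idx := idx_change p 1 (2 * p).
have /andP[b12 ord4] : basis p 1 (2 * p) && all_idx p (fun k => iter 4 sigma_idx k == k).
  by rewrite /sigma_idx p3 sigma3_basis_period4.
have iter_lt i k : k < p * p -> iter i sigma_idx k < p * p.
  by case: i => // i _; apply: idx_change_lt.
have [sg AutDsg sgE] :=
  Aut_basis_change (idx_eltD aD bD 1) (idx_eltD aD bD (2 * p)) (basis_inj b12).
have sg_iter i k : k < p * p -> (sg ^+ i) (phi k) = phi (iter i sigma_idx k).
  move=> lt_k; elim: i => [|i IH]; first by rewrite expg0 perm1.
  by rewrite expgSr permM IH sgE ?iter_lt // -idx_elt_change.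
have sg4 : sg ^+ 4 = 1.
  apply: (eq_Aut (groupX 4 AutDsg) (group1 _)) => _ /phi_onto[k lt_k <-].
  by rewrite perm1 sg_iter // (eqP (allP ord4 k _)) ?mem_iota.
have p_gt1 : 1 < p by rewrite p3.
have phi_a : phi p = a by rewrite /idx_elt divnn p_gt0 modnn expg1 expg0 mulg1.
have phi_b : phi 1 = b by rewrite /idx_elt divn_small // modn_small // expg0 expg1 mul1g.
have phi_a2 : phi (2 * p) = a ^+ 2 by rewrite /idx_elt mulnK // modnMl expg0 mulg1.
have lt_p : p < p * p by rewrite -{1}(muln1 p) ltn_mul2l p_gt0.
exists sg; split=> //.
- by rewrite -phi_a sgE // /idx_elt divnn p_gt0 modnn expg1 expg0 mulg1.
- rewrite -phi_b sgE ?(ltn_trans p_gt1) //.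
  by rewrite /idx_elt divn_small // modn_small // expg0 expg1 mul1g.
have [g AutDg gE] := Aut_basis_change (idx_eltD aD bD u) (idx_eltD aD bD v) (basis_inj buv).
exists g^-1; first by rewrite groupV.
apply: (Cyc_conj_orbits partS AutDg); first by rewrite cycle_subG.
move=> _ _ /phi_onto[k lt_k <-] /phi_onto[l lt_l <-].
rewrite !gE // -same_block_relabel // -porbitE.
have /allP/(_ k) := sig; rewrite mem_iota => /(_ lt_k); cbv beta zeta => /allP/(_ l).
rewrite mem_iota => /(_ lt_l) /eqP ->.
apply/trajectP/porbitP => [[i _ ->]|[i eq_l]]; first by exists i; rewrite sg_iter.
exists (i %% 4); first exact: ltn_pmod.
by apply: phi_inj; rewrite ?inE ?iter_lt // eq_l -sg_iter // (expg_mod _ sg4).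
Qed.

End SringLabels.

End Coordinates.

Theorem lemma6p2 (gT : finGroupType) (p : nat) (D : {group gT}) (a b : gT)
  (S : {set {set gT}}) :
  (p == 2) || (p == 3) ->
  #[a] = p -> #[b] = p -> <[a]> \x <[b]> = D ->
  is_Sring D S ->
  [\/ sring_rank S = 2,
      (exists (A1 A2 : {group gT}) (S1 S2 : {set {set gT}}),
         [/\ A1 \x A2 = D, (cyclic A1 /\ #|A1| = p), (cyclic A2 /\ #|A2| = p),
             (is_Sring A1 S1 /\ is_Sring A2 S2) & S = tensor_bs S1 S2]),
      (exists (A1 A2 : {group gT}) (S1 S2 : {set {set gT}}),
         [/\ A1 \x A2 = D, (cyclic A1 /\ #|A1| = p), (cyclic A2 /\ #|A2| = p),
             (is_Sring A1 S1 /\ is_Sring A2 S2) & S = wreath_bs A1 S1 S2])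
      |
      (p = 3 /\ exists delta : {perm gT},
         [/\ delta \in Aut D, (forall x, x \in D -> delta x = x^-1) &
             S = Cyc [set 1; delta] D]) \/
      (p = 3 /\ exists sigma : {perm gT},
         [/\ sigma \in Aut D, sigma a = b, sigma b = a ^+ 2 &
             (exists2 f : {perm gT}, f \in Aut D &
               [set (f : gT -> gT) @: X | X : {set gT} in S] = Cyc <[sigma]> D)])].
Proof.
move=> p23 oa ob defD sringS.
have checked : srings_classified p.
  by case/orP: p23 => /eqP->; [exact: srings_classified2 | exact: srings_classified3].
have /allP/(_ _ (labels_in p defD sringS)) := checked.
rewrite (labels_unit_block oa ob defD sringS) (labels_inv_closed oa ob defD sringS).
rewrite (labels_sub_count_const oa ob defD sringS).
case/or3P => [rk2|/andP[/eqP p3 inv]|/hasP[u _ /hasP[v _ /andP[buv cases]]]].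
- by apply/Or41/(rank2_case oa ob defD sringS _ rk2); case/orP: p23 => /eqP->.
- by apply: Or44; left; split=> //; apply: (inv_case oa ob defD sringS inv).
case/or3P: cases => [/hasP[t1 _ /hasP[t2 _ tens]]|/hasP[t1 _ /hasP[t2 _ wr]]|/andP[/eqP p3 sig]].
- by apply/Or42/(tensor_case oa ob defD sringS buv tens).
- by apply/Or43/(wreath_case oa ob defD sringS buv wr).
by apply: Or44; right; split=> //; apply: (sigma_case oa ob defD sringS p3 buv sig).
Qed.
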